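(* Let $\overrightarrow{W}$ be a Morse sequence on a simplicial complex $K$. Then for every $p$, $\overline O[p]=\{c\in K[p]:\overline\Phi_p(c)=c\}$ and $\underline O[p]=\{c\in K[p]:\underline\Phi_p(c)=c\}$.
   Context: A simplicial complex $K$ is a finite collection of non-empty finite sets closed under taking non-empty subsets; $\dim\sigma=|\sigma|-1$, $K^{(p)}$ the set of $p$-simplices. A pair $(\sigma,\tau)$ with $\sigma\subsetneq\tau$ is a free pair for $K$ if $\tau$ is the only simplex other than $\sigma$ containing $\sigma$; $K$ is then an elementary expansion of $K\setminus\{\sigma,\tau\}$. If $\nu$ is a facet (maximal simplex) of $K$, $K$ is an elementary filling of $K\setminus\{\nu\}$. A Morse sequence on $K$ is a sequence $\langle\emptyset=K_0,\dots,K_k=K\rangle$ with each $K_i$ an elementary expansion or filling of $K_{i-1}$; simplices added by fillings are critical; for an expansion $K_i=K_{i-1}\cup\{\sigma,\tau\}$, $\sigma\subset\tau$, $(\sigma,\tau)$ is a regular pair, $\sigma$ lower regular, $\tau$ upper regular. $\widehat W$ is the set of critical simplices. $K[p]$ is the $\mathbb{Z}_2$-vector space of subsets of $K^{(p)}$ (sum = symmetric difference, $0=\emptyset$), $\widehat W[p]=\{c\in K[p]:c\subseteq\widehat W\}$. For $\sigma\in K^{(p)}$, $\partial(\sigma)=\{\tau\in K^{(p-1)}:\tau\subset\sigma\}$, $\delta(\sigma)=\{\tau\in K^{(p+1)}:\sigma\subset\tau\}$, with linear extensions $\partial_p,\delta_p$. The reference map $\curlywedge$ is the unique map assigning to each $p$-simplex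 an element of $\widehat W[p]$, extended linearly, with $\curlywedge(\nu)=\{\nu\}$ for critical $\nu$ and $\curlywedge(\tau)=0=\curlywedge(\partial(\tau))$ for upper regular $\tau$; the coreference map $\curlyvee$ is the unique such map with $\curlyvee(\nu)=\{\nu\}$ for critical $\nu$ and $\curlyvee(\sigma)=0=\curlyvee(\delta(\sigma))$ for lower regular $\sigma$. Extension maps: $\widetilde\curlywedge_p,\widetilde\curlyvee_p:\widehat W[p]\to K[p]$ linear with $\widetilde\curlywedge(\kappa)=\{\nu\in K:\kappa\in\curlyvee(\nu)\}$, $\widetilde\curlyvee(\kappa)=\{\nu\in K:\kappa\in\curlywedge(\nu)\}$ for critical $\kappa$; $\overline O[p]=\operatorname{im}\widetilde\curlywedge_p$, $\underline O[p]=\operatorname{im}\widetilde\curlyvee_p$. Let $V_p:K[p]\to K[p+1]$ and $V^*_p:K[p]\to K[p-1]$ be the linear maps with $V(\kappa)=V^*(\kappa)=0$ for critical $\kappa$, and $V(\sigma)=\tau$, $V(\tau)=0$, $V^*(\sigma)=0$, $V^*(\tau)=\sigma$ for each regular pair $(\sigma,\tau)$. The flow and coflow are the linear maps $\Phi_p(\nu)=\nu+\partial_{p+1}(V_p(\nu))+V_{p-1}(\partial_p(\nu))$ and $\Phi^*_p(\nu)=\nu+\delta_{p-1}(V^*_p(\nu))+V^*_{p+1}(\delta_p(\nu))$ for $\nu\in K^{(p)}$. For each $c\in K[p]$ there are $i,j\ge0$ with $\Phi^{i+1}(c)=\Phi^i(c)$ and $(\Phi^* )^{j+1}(c)=(\Phi^*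 )^j(c)$; $\overline\Phi_p(c)=\Phi^i(c)$ and $\underline\Phi_p(c)=(\Phi^* )^j(c)$. *)

(* Simplicial complexes over a finite vertex type V;
   simplices are {set V}, chains (elements of K[p]) are {set {set V}} with
   symmetric difference as Z_2-addition. *)
From mathcomp Require Import all_boot.
Set Implicit Arguments. Unset Strict Implicit. Unset Printing Implicit Defensive.

Section Morse.
Variable V : finType.
Notation simplex := {set V}.
Notation chain := {set {set V}}.

Definition is_complex (K : chain) : Prop :=
  set0 \notin K /\
  forall s t : simplex, s \in K -> t \subset s -> t != set0 -> t \in K.

(* K^(p) : the p-simplices of K  (dim s = |s| - 1) *)
Definition skel (K : chain) (p : nat) : chain := [set s in K | #|s| == p.+1].

Definition cadd (c d : chain) : chain := [set t | (t \in c) (+) (t \in d)].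

(* linear (Z_2) extension of a map defined on simplices *)
Definition lin (f : simplex -> chain) (c : chain) : chain :=
  [set t | odd #|[set s in c | t \in f s]|].

Definition bd (K : chain) (s : simplex) : chain :=
  [set t in K | (t \proper s) && (#|t|.+1 == #|s|)].
Definition cobd (K : chain) (s : simplex) : chain :=
  [set t in K | (s \proper t) && (#|s|.+1 == #|t|)].

Inductive step := Fill of simplex | Expand of simplex & simplex.

Definition added (st : step) : chain :=
  match st with Fill n => [set n] | Expand s t => [set s; t] end.

Definition Kpref (W : seq step) (i : nat) : chain :=
  \bigcup_(st <- take i W) added st.

Definition step_ok (Kprev Knext : chain) (st : step) : Prop :=
  is_complex Knext /\
  match st with
  | Fill n => n \notin Kprev /\
              (forall x, x \in Knext -> n \subset x -> x = n)
  | Expand s t => s \proper t /\ s \notin Kprev /\ t \notin Kprev /\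
              (forall x, x \in Knext -> s \subset x -> x = s \/ x = t)
  end.

Definition morse_seq (K : chain) (W : seq step) : Prop :=
  (forall i, i < size W ->
     step_ok (Kpref W i) (Kpref W i.+1) (nth (Fill set0) W i)) /\
  Kpref W (size W) = K.

Definition crit (W : seq step) : chain :=
  \bigcup_(st <- W) (if st is Fill n then [set n] else set0).
Definition lower_reg (W : seq step) (s : simplex) : bool :=
  has (fun st => if st is Expand a _ then a == s else false) W.
Definition upper_reg (W : seq step) (t : simplex) : bool :=
  has (fun st => if st is Expand _ b then b == t else false) W.

Definition Vmap (W : seq step) (s : simplex) : chain :=
  \bigcup_(st <- W) (if st is Expand a b then (if a == s then [set b] else set0)
                     else set0).
Definition Vstar (W : seq step) (t : simplex) : chain :=
  \bigcup_(st <- W) (if st is Expand a b then (if b == t then [set a] else set0)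
                     else set0).

Definition flow (K : chain) (W : seq step) (c : chain) : chain :=
  lin (fun n => cadd (cadd [set n] (lin (bd K) (Vmap W n)))
                     (lin (Vmap W) (bd K n))) c.
Definition coflow (K : chain) (W : seq step) (c : chain) : chain :=
  lin (fun n => cadd (cadd [set n] (lin (cobd K) (Vstar W n)))
                     (lin (Vstar W) (cobd K n))) c.

Definition stab (F : chain -> chain) (c d : chain) : Prop :=
  exists i, iter i.+1 F c = iter i F c /\ iter i F c = d.

(* characterization of the reference map (the unique such map) *)
Definition is_reference (K : chain) (W : seq step) (f : simplex -> chain) : Prop :=
  (forall s, s \in K -> f s \subset crit W :&: skel K (#|s|.-1)) /\
  (forall n, n \in crit W -> f n = [set n]) /\
  (forall t, t \in K -> upper_reg W t -> f t = set0 /\ lin f (bd K t) = set0).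

(* characterization of the coreference map (the unique such map) *)
Definition is_coreference (K : chain) (W : seq step) (g : simplex -> chain) : Prop :=
  (forall s, s \in K -> g s \subset crit W :&: skel K (#|s|.-1)) /\
  (forall n, n \in crit W -> g n = [set n]) /\
  (forall s, s \in K -> lower_reg W s -> g s = set0 /\ lin g (cobd K s) = set0).

Definition ext_up (K : chain) (g : simplex -> chain) (k : simplex) : chain :=
  [set n in K | k \in g n].
Definition ext_down (K : chain) (f : simplex -> chain) (k : simplex) : chain :=
  [set n in K | k \in f n].

Definition Obar (K : chain) (W : seq step) (g : simplex -> chain) (p : nat)
  (c : chain) : Prop :=
  exists2 d : chain, d \subset crit W :&: skel K p & lin (ext_up K g) d = c.
Definition Ounder (K : chain) (W : seq step) (f : simplex -> chain) (p : nat)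
  (c : chain) : Prop :=
  exists2 d : chain, d \subset crit W :&: skel K p & lin (ext_down K f) d = c.

End Morse.

From mathcomp Require Import all_boot zify.
Set Implicit Arguments. Unset Strict Implicit. Unset Printing Implicit Defensive.

(* Write the flow as Phi c = c + d V c + V d c.  If Phi c = c then d V c = V d c.
   A lower regular simplex s of c added at the latest step lies in d V c, since
   by acyclicity its partner is the only simplex of V c having s as a face; but
   V d c consists of upper regular simplices.  Hence V c = 0, and then V d c = 0;
   conversely these two conditions give Phi c = c.  The defining properties of
   the coreference map say exactly that the extension of a critical chain
   satisfies both conditions.  A chain satisfying them is the extension of its
   critical part: the difference of the two consists of upper regular simplices,
   and the partner of the latest one would be a lower regular simplex of its
   boundary.  The coflow is the flow of the transposed matching for the
   coboundary, with the order of the steps reversed, so the same argument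
   applies. *)

Section ChainAlgebra.
Variable V : finType.
Notation simplex := {set V}.
Notation chain := {set {set V}}.

Lemma in_lin (F : simplex -> chain) (c : chain) t :
  (t \in lin F c) = \big[addb/false]_(s in c) (t \in F s).
Proof.
rewrite inE -sum1_card (eq_bigl (fun s => (s \in c) && (t \in F s))) => [|s].
  rewrite big_mkcondr /= (big_morph odd oddD (erefl : odd 0 = false)).
  by apply: eq_bigr => s _; case: (t \in F s).
by rewrite inE.
Qed.

Lemma big_addb_pred1 (c : chain) (P : pred simplex) u :
  (forall s, s \in c -> P s -> s = u) ->
  \big[addb/false]_(s in c) P s = (u \in c) && P u.
Proof.
move=> onlyu; case: (boolP ((u \in c) && P u)) => [/andP [uc Pu]|nPu].
  rewrite (bigD1 u) //= Pu big1 // => s /andP [sc su].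
  by apply/negP => Ps; move/eqP: su; apply; apply: onlyu.
apply: big1 => s sc; apply/negP => Ps.
by move: nPu; rewrite -(onlyu s sc Ps) sc Ps.
Qed.

Lemma big_addb_exists (c : chain) (P : pred simplex) :
  \big[addb/false]_(s in c) P s -> exists2 s, s \in c & P s.
Proof.
case: (boolP [exists s, (s \in c) && P s]) => [/existsP [s /andP [sc Ps]] _|/existsPn noP].
  by exists s.
by rewrite big1 // => s sc; move: (noP s); rewrite sc => /negbTE.
Qed.

Lemma mem_lin_ex (F : simplex -> chain) (c : chain) t :
  t \in lin F c -> exists2 s, s \in c & t \in F s.
Proof. by rewrite in_lin => /big_addb_exists. Qed.

Lemma skel_sub (K c : chain) p : c \subset skel K p -> {subset c <= K}.
Proof. by move=> /subsetP cS x /cS; rewrite inE => /andP []. Qed.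

Lemma cadd_eq0 (c d : chain) : cadd c d = set0 -> c = d.
Proof.
move/setP => cd; apply/setP => t; move: (cd t); rewrite !inE.
by case: (t \in c); case: (t \in d).
Qed.

Lemma cadd2_fixed (c x y : chain) : cadd (cadd c x) y = c <-> x = y.
Proof.
split=> [/setP cxy|->]; last by apply/setP => t; rewrite !inE addbK.
apply/setP => t; move: (cxy t); rewrite !inE.
by case: (t \in c); case: (t \in x); case: (t \in y).
Qed.

Lemma in_cadd (c d : chain) t : t \in cadd c d -> (t \in c) || (t \in d).
Proof. by rewrite inE; case: (t \in c). Qed.

Lemma linD_fun (A B : simplex -> chain) (c : chain) :
  lin (fun n => cadd (A n) (B n)) c = cadd (lin A c) (lin B c).
Proof.
apply/setP => t; rewrite [in RHS]inE !in_lin -big_split /=.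
by apply: eq_bigr => s _; rewrite inE.
Qed.

Lemma linD (F : simplex -> chain) (c d : chain) :
  lin F (cadd c d) = cadd (lin F c) (lin F d).
Proof.
apply/setP => t; rewrite [in RHS]inE !in_lin.
rewrite (big_mkcond (fun s => s \in cadd c d)) (big_mkcond (fun s => s \in c)).
rewrite (big_mkcond (fun s => s \in d)) -big_split /=.
apply: eq_bigr => s _; rewrite inE.
by case: (s \in c); case: (s \in d); case: (t \in F s).
Qed.

Lemma lin_id (c : chain) : lin (fun n => [set n]) c = c.
Proof.
apply/setP => t; rewrite in_lin (big_addb_pred1 (u := t)) => [|s _].
  by rewrite inE eqxx andbT.
by rewrite inE => /eqP.
Qed.

Lemma lin0 (F : simplex -> chain) : lin F set0 = set0.
Proof. by apply/setP => t; rewrite in_lin big_pred0 ?inE // => s; rewrite inE. Qed.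

Lemma lin_comp (F G : simplex -> chain) (c : chain) :
  lin G (lin F c) = lin (fun n => lin G (F n)) c.
Proof.
apply/setP => t; rewrite !in_lin big_mkcond /=.
transitivity (\big[addb/false]_u \big[addb/false]_(s in c) ((u \in F s) && (t \in G u))).
  apply: eq_bigr => u _; rewrite in_lin -big_distrl /=.
  by case: (\big[addb/false]_(s in c) _); case: (t \in G u).
rewrite exchange_big /=; apply: eq_big => // s _.
rewrite in_lin [RHS]big_mkcond /=; apply: eq_bigr => u _.
by case: (u \in F s).
Qed.

Lemma mem_bigcup_seq (T : Type) (F : T -> chain) (s : seq T) x :
  (x \in \bigcup_(i <- s) F i) = has (fun i => x \in F i) s.
Proof. by rewrite (big_morph _ (in_setU x) (in_set0 x)) big_has. Qed.

Lemma stabE (F : chain -> chain) (c : chain) : stab F c c <-> F c = c.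
Proof.
split=> [[i [Fi ic]]|Fc]; last by exists 0.
by move: Fi; rewrite iterS ic.
Qed.

End ChainAlgebra.

Section Matching.
Variable V : finType.
Notation simplex := {set V}.
Notation chain := {set {set V}}.

Definition Flow (B Vf : simplex -> chain) (c : chain) :=
  lin (fun n => cadd (cadd [set n] (lin B (Vf n))) (lin Vf (B n))) c.

(* [t \in Vf s] says that (s, t) is a regular pair, with s lower (Lp) and
   t upper (Up) regular; r ranks the simplices (the step adding them).
   [bd_rank] is the acyclicity: a face never has larger rank, and has the same
   rank only as the lower half of a regular pair. *)
Record acyclic_matching (K crt : chain) (B C Vf : simplex -> chain)
    (Lp Up : pred simplex) (r : simplex -> nat) : Prop := {
  bd_sub : forall x y, y \in B x -> y \in K;
  cobd_sub : forall x y, y \in C x -> y \in K;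
  bd_cobd : forall x y, x \in K -> y \in K -> (y \in B x) = (x \in C y);
  pair_spec : forall s t, t \in Vf s -> [/\ s \in K, t \in K, Lp s, Up t & s \in B t];
  pair_rank : forall s t, t \in Vf s -> r s = r t;
  lower_paired : forall s, s \in K -> Lp s -> exists t, t \in Vf s;
  upper_paired : forall t, t \in K -> Up t -> exists s, t \in Vf s;
  pair_fun : forall s t t', t \in Vf s -> t' \in Vf s -> t = t';
  pair_inj : forall s s' t, t \in Vf s -> t \in Vf s' -> s = s';
  crit_lower_upper : forall x, x \in K -> [|| x \in crt, Lp x | Up x];
  lower_upper_disj : forall x, Lp x -> Up x -> False;
  bd_rank : forall x y, x \in K -> y \in B x -> r y <= r x /\ (r y = r x -> x \in Vf y)
}.

Lemma acyclic_matching_dual (K crt : chain) (B C Vf Vf' : simplex -> chain)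
    (Lp Up : pred simplex) (r : simplex -> nat) (N : nat) :
  acyclic_matching K crt B C Vf Lp Up r ->
  (forall s t, (s \in Vf' t) = (t \in Vf s)) ->
  (forall x, x \in K -> r x < N) ->
  acyclic_matching K crt C B Vf' Up Lp (fun x => N - r x).
Proof.
move=> M Vf'E rN; split=> [||||s t|s|t|s t t'|s s' t|x|x Ux Lx|x y xK yC].
- exact: cobd_sub M.
- exact: bd_sub M.
- by move=> x y xK yK; rewrite (bd_cobd M yK xK).
- move=> s t; rewrite Vf'E => /(pair_spec M) [tK sK Lt Us tB].
  by split=> //; rewrite -(bd_cobd M sK tK).
- by rewrite Vf'E => /(pair_rank M) ->.
- by move=> sK /(upper_paired M sK) [t ts]; exists t; rewrite Vf'E.
- by move=> tK /(lower_paired M tK) [s st]; exists s; rewrite Vf'E.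
- by rewrite !Vf'E => ts t's; apply: (pair_inj M) ts t's.
- by rewrite !Vf'E => ts ts'; apply: (pair_fun M) ts ts'.
- by move/(crit_lower_upper M); case: (x \in crt); case: (Lp x); case: (Up x).
- exact: lower_upper_disj M _ Lx Ux.
- have yK := cobd_sub M yC; rewrite -(bd_cobd M yK xK) in yC.
  have [ryx eq_r] := bd_rank M yK yC; have rxN := rN x xK; have ryN := rN y yK.
  split=> [|e]; first lia.
  by rewrite Vf'E; apply: eq_r; lia.
Qed.

End Matching.

Section FlowFixedPoints.
Variable V : finType.
Notation simplex := {set V}.
Notation chain := {set {set V}}.
Variables (K crt : chain) (B C Vf : simplex -> chain) (Lp Up : pred simplex).
Variable r : simplex -> nat.
Hypothesis M : acyclic_matching K crt B C Vf Lp Up r.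

Definition no_lower (c : chain) := forall s, s \in c -> ~~ Lp s.
Definition lower_free (c : chain) := no_lower c /\ no_lower (lin B c).

Lemma FlowE (c : chain) :
  Flow B Vf c = cadd (cadd c (lin B (lin Vf c))) (lin Vf (lin B c)).
Proof. by rewrite /Flow !linD_fun lin_id -(lin_comp Vf B c) -(lin_comp B Vf c). Qed.

Lemma lin_bd_sub (c : chain) : {subset lin B c <= K}.
Proof. by move=> s /mem_lin_ex [u _ /(bd_sub M)]. Qed.

Lemma linV_mem (d : chain) s t : s \in d -> t \in Vf s -> t \in lin Vf d.
Proof.
move=> sd ts; rewrite in_lin (big_addb_pred1 (u := s)) ?sd ?ts //.
by move=> s' _ ts'; apply: (pair_inj M) ts' ts.
Qed.

Lemma linV_eq0 (d : chain) : {subset d <= K} -> lin Vf d = set0 <-> no_lower d.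
Proof.
move=> dK; split=> [Vd0 s sd|noL].
  apply/negP => Ls; have [t ts] := lower_paired M (dK _ sd) Ls.
  by move: (linV_mem sd ts); rewrite Vd0 inE.
apply/setP => t; rewrite in_set0; apply/negP => /mem_lin_ex [s sd /(pair_spec M) [_ _ Ls _ _]].
by move: (noL s sd); rewrite Ls.
Qed.

Lemma max_rank_partner_in_bd (e : chain) sig tau :
  {subset e <= K} -> tau \in e -> {in e, forall u, r u <= r tau} ->
  tau \in Vf sig -> sig \in lin B e.
Proof.
move=> eK taue maxtau pst; have [_ _ _ _ sigB] := pair_spec M pst.
rewrite in_lin (big_addb_pred1 (u := tau)) ?taue ?sigB // => u ue sigBu.
have [le_su eq_su] := bd_rank M (eK _ ue) sigBu.
have r_eq : r sig = r u by apply/eqP; rewrite eqn_leq le_su (pair_rank M pst) maxtau.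
exact (pair_fun M (eq_su r_eq) pst).
Qed.

Lemma no_lower_of_commuting (c : chain) : {subset c <= K} ->
  lin B (lin Vf c) = lin Vf (lin B c) -> no_lower c.
Proof.
move=> cK comm s0 s0c; apply/negP => Ls0.
have [|sig /andP [sigc Lsig] maxsig] := @arg_maxnP _ s0 [pred s | (s \in c) && Lp s] r.
  by rewrite /= s0c.
have [tau pst] := lower_paired M (cK _ sigc) Lsig.
have VcK : {subset lin Vf c <= K}.
  by move=> u /mem_lin_ex [s _ /(pair_spec M) []].
have maxtau : {in lin Vf c, forall u, r u <= r tau}.
  move=> u /mem_lin_ex [s sc us]; rewrite -(pair_rank M us) -(pair_rank M pst).
  by apply: maxsig; rewrite /= sc; case: (pair_spec M us).
have := max_rank_partner_in_bd VcK (linV_mem sigc pst) maxtau pst.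
rewrite comm => /mem_lin_ex [s _ /(pair_spec M) [_ _ _ Usig _]].
exact: lower_upper_disj M _ Lsig Usig.
Qed.

Lemma flow_fixedP (c : chain) : {subset c <= K} -> Flow B Vf c = c <-> lower_free c.
Proof.
move=> cK; rewrite FlowE cadd2_fixed.
split=> [comm|[noLc noLBc]].
  have noLc := no_lower_of_commuting cK comm.
  split=> //; apply/(linV_eq0 (@lin_bd_sub c)); rewrite -comm.
  by rewrite (proj2 (linV_eq0 cK) noLc) lin0.
by rewrite (proj2 (linV_eq0 cK) noLc) (proj2 (linV_eq0 (@lin_bd_sub c)) noLBc) lin0.
Qed.

Lemma upper_chain_eq0 (e : chain) : {subset e <= K} -> {in e, forall u, Up u} ->
  no_lower (lin B e) -> e = set0.
Proof.
move=> eK eU noL; apply/setP => u0; rewrite inE; apply/negP => u0e.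
have [tau taue maxtau] := @arg_maxnP _ u0 (mem e) r u0e.
have [sig pst] := upper_paired M (eK _ taue) (eU _ taue).
have [_ _ Lsig _ _] := pair_spec M pst.
by move: (noL _ (max_rank_partner_in_bd eK taue maxtau pst)); rewrite Lsig.
Qed.

Lemma no_lower_cadd (c d : chain) : no_lower c -> no_lower d -> no_lower (cadd c d).
Proof. by move=> noLc noLd s /in_cadd /orP [/noLc | /noLd]. Qed.

Lemma lower_free_cadd (c d : chain) :
  lower_free c -> lower_free d -> lower_free (cadd c d).
Proof. by move=> [? ?] [? ?]; rewrite /lower_free linD; split; apply: no_lower_cadd. Qed.

Variable g : simplex -> chain.
Hypothesis K0 : set0 \notin K.
Hypothesis g_sub : forall s, s \in K -> g s \subset crt :&: skel K (#|s|.-1).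
Hypothesis g_crit : forall n, n \in crt -> g n = [set n].
Hypothesis g_lower : forall s, s \in K -> Lp s -> g s = set0 /\ lin g (C s) = set0.

Notation ext := (lin (ext_up K g)).

Lemma in_ext (d : chain) t :
  (t \in ext d) = (t \in K) && \big[addb/false]_(k in d) (k \in g t).
Proof.
rewrite in_lin; case: (boolP (t \in K)) => tK /=.
  by apply: eq_bigr => k _; rewrite inE tK.
by apply: big1 => k _; rewrite inE (negbTE tK).
Qed.

Lemma ext_sub (d : chain) : {subset ext d <= K}.
Proof. by move=> t; rewrite in_ext => /andP []. Qed.

Lemma ext_skel p (d : chain) : d \subset crt :&: skel K p -> ext d \subset skel K p.
Proof.
move=> /subsetP dS; apply/subsetP => t tc; have tK := ext_sub tc.
move: tc; rewrite in_ext tK => /big_addb_exists [k kd kg].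
move: (dS _ kd); rewrite !inE => /andP [_ /andP [_ /eqP kp]].
move/subsetP: (g_sub tK) => /(_ _ kg); rewrite !inE => /andP [_ /andP [_ /eqP kt]].
have t0 : 0 < #|t| by rewrite card_gt0; apply: contraNneq K0 => <-.
by rewrite tK /= -(prednK t0) -kt kp.
Qed.

Lemma bd_ext_up k s : s \in K -> (s \in lin B (ext_up K g k)) = (k \in lin g (C s)).
Proof.
move=> sK; rewrite !in_lin big_mkcond [RHS]big_mkcond; apply: eq_bigr => n _.
case: (boolP (n \in K)) => nK.
  by rewrite inE nK -(bd_cobd M nK sK); case: (s \in B n); case: (k \in g n).
by rewrite inE (negbTE nK); case: ifP => // /(cobd_sub M); rewrite (negbTE nK).
Qed.

Lemma ext_lower_free (d : chain) : lower_free (ext d).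
Proof.
split=> [t tc|s sB]; apply/negP => Ls.
  have tK := ext_sub tc.
  by move: tc; rewrite in_ext tK (proj1 (g_lower tK Ls)) big1 // => k _; rewrite inE.
have sK := lin_bd_sub sB.
move: sB; rewrite lin_comp in_lin big1 // => k _.
by rewrite bd_ext_up // (proj2 (g_lower sK Ls)) inE.
Qed.

Lemma ext_crit (d : chain) n : n \in K -> n \in crt -> (n \in ext d) = (n \in d).
Proof.
move=> nK ncrt; rewrite in_ext nK g_crit // (big_addb_pred1 (u := n)) => [|k _].
  by rewrite inE eqxx andbT.
by rewrite inE => /eqP.
Qed.

Lemma ext_crit_part (c : chain) : {subset c <= K} -> lower_free c -> ext (c :&: crt) = c.
Proof.
move=> cK Lc; set c' := ext (c :&: crt).
have eK : {subset cadd c c' <= K} by move=> u /in_cadd /orP [/cK | /ext_sub].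
apply/esym/cadd_eq0/upper_chain_eq0 => // [u ue|]; last first.
  exact: proj2 (lower_free_cadd Lc (ext_lower_free _)).
have uK := eK _ ue.
have ncrt : u \notin crt.
  apply: contraTN ue => ucrt.
  by rewrite [_ \in cadd _ _]inE ext_crit // inE ucrt andbT addbb.
have nL : ~~ Lp u.
  by case/orP: (in_cadd ue) => [/(proj1 Lc) | /(proj1 (ext_lower_free _))].
by move: (crit_lower_upper M uK); rewrite (negbTE ncrt) (negbTE nL).
Qed.

Theorem ext_up_image_flow_fixed p (c : chain) :
  (exists2 d : chain, d \subset crt :&: skel K p & ext d = c) <->
  c \subset skel K p /\ stab (Flow B Vf) c c.
Proof.
split=> [[d dS <-]|[cS /stabE]].
  split; first exact: ext_skel dS.
  by apply/stabE/flow_fixedP; [exact: ext_sub | exact: ext_lower_free].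
move=> /(flow_fixedP (skel_sub cS)) Lc.
by exists (c :&: crt); [rewrite setIC setIS | exact: ext_crit_part (skel_sub cS) Lc].
Qed.

End FlowFixedPoints.

Section MorseSequence.
Variable V : finType.
Notation simplex := {set V}.
Notation chain := {set {set V}}.
Variables (K : chain) (W : seq (step V)).
Hypothesis MW : morse_seq K W.

Definition birth (x : simplex) := find (fun st => x \in added st) W.
Local Notation nthW j := (nth (Fill set0) W j).

Lemma mem_Kpref x i : i <= size W -> (x \in Kpref W i) = (birth x < i).
Proof. by move=> le_i; rewrite /Kpref mem_bigcup_seq has_take_leq. Qed.

Lemma mem_morse x : (x \in K) = (birth x < size W).
Proof. by rewrite -(proj2 MW) mem_Kpref. Qed.

Lemma birth_lt x : x \in K -> birth x < size W.
Proof. by rewrite mem_morse. Qed.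

Lemma morse_step_ok j : j < size W -> step_ok (Kpref W j) (Kpref W j.+1) (nthW j).
Proof. exact: (proj1 MW). Qed.

Lemma birth_le j x : x \in added (nthW j) -> birth x <= j.
Proof.
move=> xa; rewrite leqNgt; apply/negP => /(before_find (Fill set0)) /=.
by rewrite xa.
Qed.

Lemma birth_eq j x : j < size W -> x \in added (nthW j) -> birth x = j.
Proof.
move=> lt_j xa; apply/eqP; rewrite eqn_leq birth_le //=.
have [_ fresh] := morse_step_ok lt_j; rewrite leqNgt -(mem_Kpref _ (ltnW lt_j)).
move: xa fresh; case: (nthW j) => [n|s t] /=.
  by rewrite inE => /eqP -> [].
by rewrite !inE => /orP [] /eqP -> [_ [? [? _]]].
Qed.

Lemma added_birth x : x \in K -> x \in added (nthW (birth x)).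
Proof. by rewrite mem_morse -has_find; apply: nth_find. Qed.

Lemma complex_at_birth x : x \in K -> is_complex (Kpref W (birth x).+1).
Proof. by rewrite mem_morse => /morse_step_ok []. Qed.

Lemma morse_set0_notin : set0 \notin K.
Proof.
apply/negP => K0; have [/negP set0_notin _] := complex_at_birth K0.
by apply: set0_notin; rewrite mem_Kpref // -mem_morse.
Qed.

Lemma Vstar_Vmap s t : (s \in Vstar W t) = (t \in Vmap W s).
Proof.
rewrite !mem_bigcup_seq; apply: eq_has => -[n|a b] /=; first by rewrite !inE.
case: (b =P t) => [<-|/eqP nbt]; case: (a =P s) => [<-|/eqP nas]; rewrite !inE ?eqxx //.
  by rewrite eq_sym (negbTE nas).
by rewrite eq_sym (negbTE nbt).
Qed.

Definition paired s t := exists2 j, j < size W & nthW j = Expand s t.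

Lemma has_nthW (a : pred (step V)) : has a W <-> exists2 j, j < size W & a (nthW j).
Proof. by split => /(has_nthP (Fill set0)). Qed.

Lemma Vmap_paired s t : t \in Vmap W s <-> paired s t.
Proof.
rewrite /Vmap mem_bigcup_seq; split => [/has_nthW [j lt_j]|[j lt_j E]].
  case E: (nthW j) => [n|a b]; first by rewrite inE.
  by case: eqP => [<-|]; rewrite inE // => /eqP ->; exists j.
by apply/has_nthW; exists j => //; rewrite E eqxx inE.
Qed.

Lemma lower_regP s : lower_reg W s <-> exists t, paired s t.
Proof.
split => [/has_nthW [j lt_j]|[t [j lt_j E]]].
  by case E: (nthW j) => [n|a b] //= /eqP <-; exists b, j.
by apply/has_nthW; exists j => //; rewrite E /=.
Qed.

Lemma upper_regP t : upper_reg W t <-> exists s, paired s t.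
Proof.
split => [/has_nthW [j lt_j]|[s [j lt_j E]]].
  by case E: (nthW j) => [n|a b] //= /eqP <-; exists a, j.
by apply/has_nthW; exists j => //; rewrite E /=.
Qed.

Lemma critP n : n \in crit W <-> exists2 j, j < size W & nthW j = Fill n.
Proof.
rewrite /crit mem_bigcup_seq; split => [/has_nthW [j lt_j]|[j lt_j E]].
  by case E: (nthW j) => [m|a b]; rewrite inE // => /eqP ->; exists j.
by apply/has_nthW; exists j => //; rewrite E inE.
Qed.

Lemma birth_pair s t j : j < size W -> nthW j = Expand s t -> birth s = j /\ birth t = j.
Proof. by move=> lt_j E; split; apply: birth_eq; rewrite // E !inE eqxx ?orbT. Qed.

Lemma paired_K s t : paired s t -> s \in K /\ t \in K.
Proof.
by move=> [j lt_j E]; have [bs bt] := birth_pair lt_j E; rewrite !mem_morse bs bt.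
Qed.

Lemma paired_birth s t : paired s t -> birth s = birth t.
Proof. by move=> [j lt_j /(birth_pair lt_j) [-> ->]]. Qed.

Lemma paired_nth s t :
  paired s t -> nthW (birth s) = Expand s t /\ nthW (birth t) = Expand s t.
Proof. by move=> [j lt_j E]; have [-> ->] := birth_pair lt_j E. Qed.

Lemma paired_fun s t t' : paired s t -> paired s t' -> t = t'.
Proof. by move=> /paired_nth [E _] /paired_nth [E' _]; move: E'; rewrite E => -[]. Qed.

Lemma paired_inj s s' t : paired s t -> paired s' t -> s = s'.
Proof. by move=> /paired_nth [_ E] /paired_nth [_ E']; move: E'; rewrite E => -[]. Qed.

Lemma paired_proper s t : paired s t -> s \proper t.
Proof. by move=> [j lt_j E]; have := morse_step_ok lt_j; rewrite E => -[_ []]. Qed.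

Lemma paired_bd s t : paired s t -> s \in bd K t.
Proof.
move=> [j lt_j E]; have [_ bt] := birth_pair lt_j E.
have [sK _] : s \in K /\ t \in K by apply: paired_K; exists j.
have := morse_step_ok lt_j; rewrite E => -[[_ closed] [st [_ [_ free]]]].
have tK : t \in Kpref W j.+1 by rewrite mem_Kpref // bt.
have [sub_st [v vt vs]] := properP st.
have vsK : v |: s \in Kpref W j.+1.
  apply: closed tK _ _; first by rewrite subUset sub1set vt sub_st.
  by apply/set0Pn; exists v; rewrite !inE eqxx.
have [vs_s|vs_t] := free _ vsK (subsetUr _ _).
  by move: vs; rewrite -vs_s !inE eqxx.
by rewrite inE sK st /= -vs_t cardsU1 vs.
Qed.

Lemma morse_crit_lower_upper x :
  x \in K -> [|| x \in crit W, lower_reg W x | upper_reg W x].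
Proof.
move=> xK; have := added_birth xK; have lt_b := birth_lt xK.
case E: (nthW (birth x)) => [n|a b] /=.
  rewrite inE => /eqP xn; apply/orP; left; apply/critP.
  by exists (birth x) => //; rewrite E xn.
rewrite !inE => /orP [] /eqP xe; apply/orP; right; apply/orP.
  by left; apply/lower_regP; exists b, (birth x) => //; rewrite E xe.
by right; apply/upper_regP; exists a, (birth x) => //; rewrite E xe.
Qed.

Lemma morse_lower_upper_disj x : lower_reg W x -> upper_reg W x -> False.
Proof.
move=> /lower_regP [t pxt] /upper_regP [s psx].
have [E _] := paired_nth pxt; have [_ E'] := paired_nth psx.
move: E'; rewrite E => -[_ tx].
by move: (paired_proper pxt); rewrite tx properxx.
Qed.

Lemma bd_birth x y :
  x \in K -> y \in bd K x -> birth y <= birth x /\ (birth y = birth x -> paired y x).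
Proof.
move=> xK; rewrite inE => /andP [yK /andP [yx _]].
have [_ closed] := complex_at_birth xK.
have lt_bx := birth_lt xK.
have yKx : y \in Kpref W (birth x).+1.
  apply: closed (proper_sub yx) _; first by rewrite mem_Kpref.
  by apply: contraNneq morse_set0_notin => <-.
rewrite mem_Kpref // ltnS in yKx; split => // e.
have ya := added_birth yK; rewrite e in ya; have xa := added_birth xK.
have [_ ok] := morse_step_ok lt_bx.
move: ya xa ok; case E: (nthW (birth x)) => [n|a b] /=.
  by rewrite !inE => /eqP ye /eqP xe; rewrite ye xe properxx in yx.
rewrite !inE => /orP [] /eqP ye /orP [] /eqP xe [ab _].
- by rewrite ye xe properxx in yx.
- by rewrite ye xe; exists (birth x).
- by rewrite ye xe in yx; have := proper_trans ab yx; rewrite properxx.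
- by rewrite ye xe properxx in yx.
Qed.

Lemma morse_acyclic_matching :
  acyclic_matching K (crit W) (bd K) (cobd K) (Vmap W) (lower_reg W) (upper_reg W) birth.
Proof.
split=> [x y|x y|x y xK yK|s t /Vmap_paired pst|s t /Vmap_paired
        |s _ /lower_regP [t pst]|t _ /upper_regP [s pst]
        |s t t' /Vmap_paired + /Vmap_paired|s s' t /Vmap_paired + /Vmap_paired
        |||x y xK /(bd_birth xK) [le_yx eq_yx]].
- by rewrite inE => /andP [].
- by rewrite inE => /andP [].
- by rewrite !inE xK yK.
- have [sK tK] := paired_K pst; split=> //; last exact: paired_bd.
  + by apply/lower_regP; exists t.
  + by apply/upper_regP; exists s.
- exact: paired_birth.
- by exists t; apply/Vmap_paired.
- by exists s; apply/Vmap_paired.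
- exact: paired_fun.
- exact: paired_inj.
- exact: morse_crit_lower_upper.
- exact: morse_lower_upper_disj.
- by split=> // /eq_yx /Vmap_paired.
Qed.

End MorseSequence.

Theorem corollary2 (V : finType) (K : {set {set V}}) (W : seq (step V))
  (f g : {set V} -> {set {set V}}) :
  morse_seq K W ->
  is_reference K W f ->
  is_coreference K W g ->
  forall (p : nat) (c : {set {set V}}),
    (Obar K W g p c <-> (c \subset skel K p /\ stab (flow K W) c c)) /\
    (Ounder K W f p c <-> (c \subset skel K p /\ stab (coflow K W) c c)).
Proof.
move=> MW [f_sub [f_crit f_upper]] [g_sub [g_crit g_lower]] p c.
have M := morse_acyclic_matching MW.
have M' := acyclic_matching_dual M (@Vstar_Vmap V W) (birth_lt MW).
have K0 := morse_set0_notin MW.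
split; first exact (ext_up_image_flow_fixed M K0 g_sub g_crit g_lower p c).
exact (ext_up_image_flow_fixed M' K0 f_sub f_crit f_upper p c).
Qed.
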